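(* Let $m,k$ be positive integers with $\gcd(k,m)=1$, $m$ odd and $m>k+2$. For $z\in\mathbb{F}_{2^k}$ define $f^{(z)}:\mathbb{F}_{2^m}\times\mathbb{F}_{2^m}\to\mathbb{F}_2$ by $f^{(z)}(x_1,x_2)={\rm Tr}_1^m(x_1x_2^{2^k+1})$ if ${\rm Tr}_1^k(z)=0$ and $f^{(z)}(x_1,x_2)={\rm Tr}_1^m(x_2x_1^{2^k+1})$ if ${\rm Tr}_1^k(z)=1$. Then $f:\mathbb{F}_{2^m}\times\mathbb{F}_{2^m}\times\mathbb{F}_{2^k}\times\mathbb{F}_{2^k}\to\mathbb{F}_2$, $f(x_1,x_2,y,z)=f^{(z)}(x_1,x_2)+{\rm Tr}_1^k(yz)$, is a GMM function that is not in the class $MM^{\#}$.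
   Context: ${\rm Tr}_a^b$ denotes the trace from $\mathbb{F}_{2^b}$ to $\mathbb{F}_{2^a}$. A GMM (generalized Maiorana–McFarland) function is one of the form $f(x,y,z)=f^{(z)}(x)+{\rm Tr}_1^k(yz)$ on $W\times\mathbb{F}_{2^k}\times\mathbb{F}_{2^k}$ with every $f^{(z)}$ bent on $W$. Two Boolean functions $f,g$ on an $\mathbb{F}_2$-space $X$ are EA-equivalent if $g(x)=f(L(x)+a)+\langle c,x\rangle+b$ with $L$ a linear permutation of $X$, $a,c\in X$, $b\in\mathbb{F}_2$. The Maiorana–McFarland class on $\mathbb{F}_{2^N}\times\mathbb{F}_{2^N}$ consists of functions ${\rm Tr}_1^N(x\pi(y))+g(y)$ with $\pi$ a permutation of $\mathbb{F}_{2^N}$ and $g$ arbitrary; $MM^{\#}$ is the set of Boolean functions on a $2N$-dimensional $\mathbb{F}_2$-space EA-equivalent (after a linear identification with $\mathbb{F}_{2^N}^2$) to such a function. *)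

From HB Require Import structures.
From mathcomp Require Import all_boot all_order all_algebra all_field.
Set Implicit Arguments. Unset Strict Implicit. Unset Printing Implicit Defensive.
Import Order.TTheory GRing.Theory Num.Theory.
Local Open Scope ring_scope.

(* Boolean functions take values in bool; addition in F_2 is xor (+). *)

(* Absolute trace Tr_1^n : F_{2^n} -> F_2, as an element of F
   (F is a field of order 2^n, so Tr_1^n x lies in the prime field). *)
Definition trace (F : finFieldType) (n : nat) (x : F) : F :=
  \sum_(i < n) x ^+ (2 ^ i).

(* The same trace, read as an element of F_2 = bool (Tr x = 1 <-> true). *)
Definition trb (F : finFieldType) (n : nat) (x : F) : bool := trace n x != 0.

Definition sgnb (b : bool) : int := (-1) ^+ b.

Definition walsh2 (F : finFieldType) (m : nat) (g : F * F -> bool) (a : F * F) : int :=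
  \sum_(x : F * F) sgnb (g x (+) trb m (a.1 * x.1) (+) trb m (a.2 * x.2)).

Definition bent2 (F : finFieldType) (m : nat) (g : F * F -> bool) : Prop :=
  forall a : F * F, (walsh2 m g a) ^+ 2 = (2 ^ (2 * m))%:Z.

Definition isGMM (F K : finFieldType) (m k : nat) (f : (F * F) * K * K -> bool) : Prop :=
  exists fam : K -> (F * F -> bool),
    (forall z, bent2 m (fam z)) /\
    (forall (x : F * F) (y z : K), f (x, y, z) = fam z x (+) trb k (y * z)).

(* F_2-linear maps between F_2-spaces of characteristic 2 = additive maps. *)
Definition additive_map (U V : zmodType) (phi : U -> V) : Prop :=
  forall u v, phi (u + v) = phi u + phi v.

Definition MMfun (E : finFieldType) (N : nat) (pi : E -> E) (g : E -> bool)
  (u : E * E) : bool := trb N (u.1 * pi u.2) (+) g u.2.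

(* MM^# : h on the F_2-space V belongs to MM^# (relative to the field E of
   order 2^N) if, after an F_2-linear identification psi : F_{2^N}^2 -> V,
   it is EA-equivalent to an MM function:
     MM(u) = h'(L u + a) + <c,u> + b,  h' = h o psi. *)
Definition MMsharp (V : zmodType) (E : finFieldType) (N : nat) (h : V -> bool) : Prop :=
  exists (psi : E * E -> V) (L : E * E -> E * E) (a c : E * E) (b : bool)
         (pi : E -> E) (g : E -> bool),
    [/\ additive_map psi /\ bijective psi, additive_map L /\ bijective L,
        bijective pi &
        forall u : E * E,
          MMfun N pi g u =
          h (psi (L u + a)) (+) (trb N (c.1 * u.1) (+) trb N (c.2 * u.2)) (+) b].

Definition fz (F K : finFieldType) (m k : nat) (z : K) (x : F * F) : bool :=
  if trb k z then trb m (x.2 * x.1 ^+ (2 ^ k + 1))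
  else trb m (x.1 * x.2 ^+ (2 ^ k + 1)).

Definition fcor (F K : finFieldType) (m k : nat) (v : (F * F) * K * K) : bool :=
  let: (x, y, z) := v in fz m k z x (+) trb k (y * z).

(* The components f^(z) are, up to swapping the two variables, the
   Maiorana-McFarland functions Tr(x1 pi(x2)) for the Gold map
   pi(x) = x^(2^k+1), a permutation of F_(2^m) because gcd(2k, m) = 1; so they
   are bent and f is GMM.
   A function in MM^# on a space of dimension 2N has all its second derivatives
   zero along an N-dimensional subspace (the image of F_(2^N) x 0).  For f, a
   second derivative along directions with zero z-component is one of
   Tr(x1 x2^(2^k+1)) or of its swap, and it vanishes identically only if the
   x2-parts (resp. x1-parts) u, v of the directions satisfy u^(2^k) v = u v^(2^k),
   i.e. u = 0, v = 0 or u = v.  Hence such a subspace meets {z = 0} in at most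
   4 * 2^k vectors, whereas its intersection with this codimension-k subspace has
   at least 2^m elements: impossible when m > k + 2. *)

From HB Require Import structures.
From mathcomp Require Import all_boot all_order all_algebra all_field.
From mathcomp Require Import ring zify.
Set Implicit Arguments. Unset Strict Implicit. Unset Printing Implicit Defensive.
Import Order.TTheory GRing.Theory Num.Theory.
Local Open Scope ring_scope.

Lemma trb0 (F : finFieldType) i : trb i (0 : F) = false.
Proof. by rewrite /trb /trace big1 ?eqxx // => j _; rewrite expr0n expn_eq0. Qed.

Lemma sgnb_addb (a b : bool) : sgnb (a (+) b) = sgnb a * sgnb b.
Proof. by case: a; case: b; rewrite /sgnb ?mulr1 ?mul1r ?mulrNN. Qed.

Lemma sgnb_sqr (b : bool) : sgnb b ^+ 2 = 1.
Proof. by case: b; rewrite /sgnb ?sqrrN expr1n. Qed.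

Lemma expr2_id_eq01 (R : idomainType) (x : R) : x ^+ 2 = x -> (x == 0) || (x == 1).
Proof. by rewrite expr2 => /eqP; rewrite -subr_eq0 -{3}[x]mulr1 -mulrBr mulf_eq0 subr_eq0. Qed.

Section AbsoluteTrace.

Variables (F : finFieldType) (n : nat).
Hypothesis cardF : #|F| = (2 ^ n)%N.

Lemma pchar2_card : 2 \in [pchar F].
Proof. exact: card_finPcharP cardF _. Qed.

Lemma card_exponent_gt0 : (0 < n)%N.
Proof.
by case: n cardF => // /eqP; rewrite expn0 -(subnKC (finNzRing_gt1 F)).
Qed.

Lemma frobD i (x y : F) : (x + y) ^+ (2 ^ i) = x ^+ (2 ^ i) + y ^+ (2 ^ i).
Proof. by rewrite exprDn_pchar // pnatX (pnatE _ (isT : prime 2)) pchar2_card. Qed.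

Lemma traceD i (x y : F) : trace i (x + y) = trace i x + trace i y.
Proof. by rewrite /trace -big_split; apply: eq_bigr => j _; rewrite frobD. Qed.

Lemma trace_sqr (x : F) : trace n x ^+ 2 = trace n x.
Proof.
have /prednK <- := card_exponent_gt0.
rewrite /trace -(pFrobenius_autE pchar2_card) rmorph_sum /=.
under eq_bigr => i _ do rewrite pFrobenius_autE -exprM -expnSr.
rewrite big_ord_recr big_ord_recl /= prednK ?card_exponent_gt0 // -cardF expf_card.
by rewrite addrC; congr (_ + _); apply: eq_bigr => i _.
Qed.

Lemma trace_eq01 (x : F) : (trace n x == 0) || (trace n x == 1).
Proof. exact/expr2_id_eq01/trace_sqr. Qed.

Lemma trbD (x y : F) : trb n (x + y) = trb n x (+) trb n y.
Proof.
rewrite /trb traceD.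
have one2 : 1 + 1 = 0 :> F := addrr_pchar2 pchar2_card 1.
by case/orP: (trace_eq01 x) => /eqP ->; case/orP: (trace_eq01 y) => /eqP ->;
  rewrite ?addr0 ?add0r ?one2 ?eqxx ?oner_eq0.
Qed.

Lemma size_trace_poly i :
  size (\sum_(j < i.+1) 'X^(2 ^ j) : {poly F}) = (2 ^ i).+1.
Proof.
elim: i => [|i IH]; first by rewrite big_ord1 size_polyX.
rewrite big_ord_recr /= addrC size_polyDl size_polyXn // IH ltnS expnS.
by have := expn_gt0 2 i; lia.
Qed.

Lemma trace_neq0 : exists t : F, trb n t.
Proof.
apply/existsP; apply: contraT; rewrite negb_exists => /forallP trace0.
have /prednK n1 := card_exponent_gt0.
pose P : {poly F} := \sum_(j < n) 'X^(2 ^ j).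
have sizeP : size P = (2 ^ n.-1).+1 by rewrite /P -n1 size_trace_poly.
have rootsP : all (root P) (enum F).
  apply/allP => x _; rewrite /root /P horner_sum.
  under eq_bigr => j _ do rewrite hornerXn.
  by have := trace0 x; rewrite /trb negbK.
have := max_poly_roots _ rootsP (enum_uniq F).
rewrite -size_poly_eq0 sizeP -cardE cardF -n1 expnS ltnS => /(_ isT).
by rewrite leqNgt mul2n -addnn -addn1 leq_add2l expn_gt0.
Qed.

Lemma trb_mul_eq0 (c : F) : (forall x, trb n (x * c) = false) -> c = 0.
Proof.
move=> trb0c; apply/eqP; apply: contraT => c0.
have [t trbt] := trace_neq0.
by have := trb0c (t / c); rewrite divfK // trbt.
Qed.

Lemma sum_sgnb_trb (c : F) :
  \sum_(x : F) sgnb (trb n (x * c)) = if c == 0 then (2 ^ n)%:Z else 0.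
Proof.
have [->|c0] := eqVneq c 0.
  under eq_bigr => x _ do rewrite mulr0 trb0.
  by rewrite sumr_const cardF /sgnb expr0 -[RHS]natz pmulrn.
have [t trbt] := trace_neq0.
set S := \sum_(x : F) _.
have SN : S = - S.
  rewrite {1}/S (reindex_inj (addrI (t / c))) -sumrN /=.
  apply: eq_bigr => x _.
  by rewrite mulrDl divfK // trbD trbt sgnb_addb /sgnb mulN1r.
by move/eqP: SN; rewrite -subr_eq0 opprK -mulr2n -mulr_natr mulf_eq0 => /orP[/eqP|].
Qed.

End AbsoluteTrace.

Lemma frob_fixed_mul (R : pzSemiRingType) p a (w : R) :
  w ^+ (p ^ a) = w -> forall j, w ^+ (p ^ (a * j)) = w.
Proof.
move=> wa; elim=> [|j IH]; first by rewrite muln0 expn0 expr1.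
by rewrite mulnS expnD exprM wa IH.
Qed.

Lemma frob_fixed_gcd (R : pzSemiRingType) p a b (w : R) : (0 < a)%N ->
  w ^+ (p ^ a) = w -> w ^+ (p ^ b) = w -> w ^+ (p ^ gcdn a b) = w.
Proof.
move=> a_gt0 wa wb; have [u v Bezout _] := egcdnP b a_gt0.
have := frob_fixed_mul wa u; rewrite mulnC Bezout expnD exprM.
by rewrite mulnC frob_fixed_mul.
Qed.

Section GoldPower.

Variables (F : finFieldType) (m : nat).
Hypothesis cardF : #|F| = (2 ^ m)%N.

Lemma frob_fixed_coprime k (w : F) :
  coprime k m -> w ^+ (2 ^ k) = w -> (w == 0) || (w == 1).
Proof.
move=> cop wk; apply: expr2_id_eq01.
have wm : w ^+ (2 ^ m) = w by rewrite -cardF expf_card.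
have := frob_fixed_gcd (card_exponent_gt0 cardF) wm wk.
by rewrite gcdnC (eqP cop).
Qed.

Lemma frob_twist_eq k (u v : F) : coprime k m ->
  u ^+ (2 ^ k) * v = u * v ^+ (2 ^ k) -> [\/ u = 0, v = 0 | u = v].
Proof.
move=> cop uv.
have [->|u0] := eqVneq u 0; first exact: Or31.
have [->|v0] := eqVneq v 0; first exact: Or32.
apply: Or33; have vk0 : v ^+ (2 ^ k) != 0 by rewrite expf_neq0.
have : (u / v) ^+ (2 ^ k) = u / v.
  rewrite expr_div_n; apply: (mulIf vk0); apply: (mulIf v0).
  by rewrite divfK // uv mulrAC divfK.
case/(frob_fixed_coprime cop)/orP => /eqP.
  by move/eqP; rewrite mulf_eq0 invr_eq0 (negbTE u0) (negbTE v0).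
by move/(congr1 ( *%R^~ v)); rewrite divfK // mul1r.
Qed.

Lemma expr_gold_inj k : coprime k m -> odd m ->
  injective (fun x : F => x ^+ (2 ^ k + 1)).
Proof.
move=> cop m_odd x y /= xy.
have [y0|y0] := eqVneq y 0.
  by move: xy; rewrite y0 expr0n addn1 => /eqP; rewrite expf_eq0 => /andP[_ /eqP].
pose w := x / y.
have w1 : w ^+ (2 ^ k + 1) = 1 by rewrite expr_div_n xy divff // expf_neq0.
have w0 : w != 0 by apply: contra_eq_neq w1 => ->; rewrite expr0n addn1 eq_sym oner_eq0.
have wk : w ^+ (2 ^ k) = w^-1 by apply: (mulIf w0); rewrite mulVf // -exprSr -addn1.
have w2k : w ^+ (2 ^ (k * 2)) = w by rewrite expnM exprM wk exprVn wk invrK.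
have cop2 : coprime (k * 2) m by rewrite coprimeMl cop coprime2n.
case/(frob_fixed_coprime cop2)/orP: w2k => /eqP w_eq; first by rewrite w_eq eqxx in w0.
by move: w_eq => /(congr1 ( *%R^~ y)); rewrite mul1r divfK.
Qed.

End GoldPower.

Section Bent.

Variables (F : finFieldType) (m : nat).
Hypothesis cardF : #|F| = (2 ^ m)%N.

Lemma eq_walsh2 (g h : F * F -> bool) : g =1 h -> walsh2 m g =1 walsh2 m h.
Proof. by move=> gh a; apply: eq_bigr => x _; rewrite gh. Qed.

Lemma walsh2_swap (g : F * F -> bool) a :
  walsh2 m (fun x => g (x.2, x.1)) a = walsh2 m g (a.2, a.1).
Proof.
rewrite /walsh2 (reindex_inj (can_inj (@swap_pairK F F))) /=.
by apply: eq_bigr => -[x1 x2] _; rewrite addbAC.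
Qed.

Lemma bent2_MMfun (pi : F -> F) (g : F -> bool) :
  bijective pi -> bent2 m (MMfun m pi g).
Proof.
case=> pi' piK pi'K [a1 a2]; rewrite /walsh2 /MMfun /=.
rewrite -(pair_bigA _ (fun x1 x2 => sgnb (trb m (x1 * pi x2) (+) g x2
  (+) trb m (a1 * x1) (+) trb m (a2 * x2)))) exchange_big /=.
have inner x2 : \sum_(x1 : F) sgnb (trb m (x1 * pi x2) (+) g x2
    (+) trb m (a1 * x1) (+) trb m (a2 * x2))
  = if x2 == pi' a1 then sgnb (g x2 (+) trb m (a2 * x2)) * (2 ^ m)%:Z else 0.
  under eq_bigr => x1 _.
    rewrite [a1 * x1]mulrC (addbC _ (trb m (x1 * a1))) addbA -(trbD cardF) -mulrDr.
    rewrite addbAC -addbA sgnb_addb mulrC.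
  over.
  rewrite -mulr_sumr sum_sgnb_trb // addr_eq0 (oppr_pchar2 (pchar2_card cardF)).
  have -> : (a1 == pi x2) = (x2 == pi' a1) by apply/eqP/eqP => [->|->]; rewrite ?piK ?pi'K.
  by rewrite addbC; case: eqP; rewrite ?mulr0.
under eq_bigr => x2 _ do rewrite inner.
rewrite -big_mkcond big_pred1_eq exprMn sgnb_sqr mul1r.
by rewrite expr2 -PoszM -expnD addnn mul2n.
Qed.

Lemma bent2_swap (g : F * F -> bool) :
  bent2 m g -> bent2 m (fun x => g (x.2, x.1)).
Proof. by move=> g_bent a; rewrite walsh2_swap. Qed.

End Bent.

Definition sderiv (V : zmodType) (h : V -> bool) (w a b : V) : bool :=
  h w (+) h (w + a) (+) h (w + b) (+) h (w + a + b).

Section SecondDerivative.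

Variable V : zmodType.
Implicit Types (h : V -> bool) (w a b : V).

Lemma eq_sderiv h1 h2 : h1 =1 h2 -> forall w a b, sderiv h1 w a b = sderiv h2 w a b.
Proof. by move=> h12 w a b; rewrite /sderiv !h12. Qed.

Lemma sderiv_addb h1 h2 w a b :
  sderiv (fun v => h1 v (+) h2 v) w a b = sderiv h1 w a b (+) sderiv h2 w a b.
Proof.
rewrite /sderiv; move: (h1 w) (h1 (w + a)) (h1 (w + b)) (h1 (w + a + b)).
by move: (h2 w) (h2 (w + a)) (h2 (w + b)) (h2 (w + a + b)) => [] [] [] [] [] [] [] [].
Qed.

Lemma sderiv_affine (lam : V -> bool) (c : bool) w a b :
  {morph lam : u v / u + v >-> u (+) v} -> sderiv (fun v => lam v (+) c) w a b = false.
Proof.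
move=> lamD; rewrite /sderiv !lamD.
by move: (lam w) (lam a) (lam b) c => [] [] [] [].
Qed.

Lemma sderiv_comp_affine (U : zmodType) (A A0 : U -> V) h :
  (forall u d, A (u + d) = A u + A0 d) ->
  forall u d1 d2, sderiv (h \o A) u d1 d2 = sderiv h (A u) (A0 d1) (A0 d2).
Proof. by move=> AD u d1 d2; rewrite /sderiv /= !AD. Qed.

End SecondDerivative.

Lemma sderiv_MMfun (E : finFieldType) N (pi : E -> E) (g : E -> bool) u e1 e2 :
  #|E| = (2 ^ N)%N -> sderiv (MMfun N pi g) u (e1, 0) (e2, 0) = false.
Proof.
move=> cardE; rewrite /sderiv /MMfun /= !addr0 !mulrDl !(trbD cardE).
move: (trb N (u.1 * pi u.2)) (trb N (e1 * pi u.2)) (trb N (e2 * pi u.2)).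
by move: (g u.2) => [] [] [] [].
Qed.

Lemma MMsharp_flat_embedding (V : zmodType) (E : finFieldType) N (h : V -> bool) :
  #|E| = (2 ^ N)%N -> MMsharp E N h ->
  exists Phi : E -> V, [/\ additive_map Phi, injective Phi &
    forall w e1 e2, sderiv h w (Phi e1) (Phi e2) = false].
Proof.
move=> cardE [psi [L [a [c [b [pi [g [[psiD [psi' psiK psi'K]] [LD [L' LK L'K]] _ MM_h]]]]]]]].
pose A u := psi (L u + a).
pose lam (u : E * E) := trb N (c.1 * u.1) (+) trb N (c.2 * u.2).
have lamD : {morph lam : u v / u + v >-> u (+) v}.
  move=> u v; rewrite /lam !mulrDr !(trbD cardE).
  move: (trb N (c.1 * u.1)) (trb N (c.1 * v.1)) (trb N (c.2 * u.2)).
  by move: (trb N (c.2 * v.2)) => [] [] [] [].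
have hA : h \o A =1 (fun u => MMfun N pi g u (+) (lam u (+) b)).
  move=> u; rewrite MM_h /lam /A /=.
  by move: (h _) (trb _ _) (trb _ _) => [] [] []; case: (b).
have AD u d : A (u + d) = A u + psi (L d) by rewrite /A -psiD LD addrAC.
exists (fun e => psi (L (e, 0))); split.
- by move=> e1 e2; rewrite -psiD -LD -[X in (_, X)](addr0 0).
- by move=> e1 e2 /(can_inj psiK)/(can_inj LK) [].
move=> w e1 e2.
have -> : w = A (L' (psi' w - a)) by rewrite /A L'K subrK psi'K.
rewrite -(sderiv_comp_affine h AD) (eq_sderiv hA) sderiv_addb.
by rewrite sderiv_MMfun // sderiv_affine.
Qed.

Definition gold (F : finFieldType) m k (x : F * F) : bool :=
  trb m (x.1 * x.2 ^+ (2 ^ k + 1)).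

Section Gold.

Variables (F : finFieldType) (m k : nat).
Hypotheses (cardF : #|F| = (2 ^ m)%N) (coprime_km : coprime k m).

Lemma bent2_gold : odd m -> bent2 m (gold m k : F * F -> bool).
Proof.
move=> m_odd a; have pi_bij := injF_bij (expr_gold_inj cardF coprime_km m_odd).
have gold_MM : MMfun m (fun x : F => x ^+ (2 ^ k + 1)) (fun=> false) =1 gold m k.
  by move=> x; rewrite /MMfun addbF.
by rewrite -(eq_walsh2 _ gold_MM) bent2_MMfun.
Qed.

Lemma sderiv_gold_eq0 (s1 s2 u v : F) :
  (forall x, sderiv (gold m k) (x, 0) (s1, u) (s2, v) = false) ->
  [\/ u = 0, v = 0 | u = v].
Proof.
move=> D2.
have two0 : 2%:R = 0 :> F := pcharf0 (pchar2_card cardF).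
pose q := (2 ^ k + 1)%N.
pose c := u ^+ q + v ^+ q + (u + v) ^+ q.
pose d := s1 * u ^+ q + s2 * v ^+ q + (s1 + s2) * (u + v) ^+ q.
have D2E x : sderiv (gold m k) (x, 0) (s1, u) (s2, v) = trb m (x * c) (+) trb m d.
  rewrite /sderiv /gold /= expr0n addn_eq0 andbF mulr0 trb0 -!(trbD cardF).
  rewrite /c /d /q !add0r; move: (u ^+ _) (v ^+ _) ((u + v) ^+ _) => U V W.
  by congr trb; ring.
(* The second derivative is affine in x, so its linear part c must vanish. *)
have c0 : c = 0.
  have trb_d : trb m d = false by have := D2 0; rewrite D2E mul0r trb0.
  by apply: (trb_mul_eq0 cardF) => x; have := D2 x; rewrite D2E trb_d addbF.
apply: (frob_twist_eq cardF coprime_km); apply/eqP; rewrite -subr_eq0 -c0.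
rewrite /c /q !exprD !expr1 (frobD cardF) (oppr_pchar2 (pchar2_card cardF)).
apply/eqP; move: (u ^+ _) (v ^+ _) => U V.
by rewrite -[LHS]addr0 -(mul0r (U * u + V * v)) -two0; ring.
Qed.

End Gold.

Lemma card_le_kernel (U W : finZmodType) (phi : U -> W) :
  additive_map phi -> (#|U| <= #|W| * #|[set u | phi u == 0%R]|)%N.
Proof.
move=> phiD.
have phiB u v : phi (u - v) = phi u - phi v by apply: (addIr (phi v)); rewrite -phiD !subrK.
pose r t := odflt 0 [pick u | phi u == t].
have rK u : phi (r (phi u)) = phi u.
  by rewrite /r; case: pickP => [v /eqP //|/(_ u)]; rewrite eqxx.
pose f u := (phi u, u - r (phi u)).
have f_inj : injective f by move=> u v [phi_uv]; rewrite phi_uv => /addIr.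
have f_sub : f @: [set: U] \subset setX [set: W] [set u | phi u == 0%R].
  by apply/subsetP => _ /imsetP[u _ ->]; rewrite !inE phiB rK subrr eqxx.
rewrite -cardsT -(card_imset _ f_inj).
by apply: leq_trans (subset_leq_card f_sub) _; rewrite cardsX cardsT.
Qed.

Lemma card_le2 (T : finType) (x0 : T) (S : {set T}) :
  {in S &, forall u v, [\/ u = x0, v = x0 | u = v]} -> (#|S| <= 2)%N.
Proof.
move=> S2; have [c /andP[cS cx0] | S_x0] := pickP [pred x in S | x != x0].
  apply: (@leq_trans #|[set x0; c]|); last by rewrite cards2; case: (_ != _).
  apply/subset_leq_card/subsetP => x xS; rewrite !inE.
  case: (S2 x c xS cS) => [->|c_x0|->]; rewrite ?eqxx ?orbT //.
  by rewrite c_x0 eqxx in cx0.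
apply: (@leq_trans #|[set x0]|); last by rewrite cards1.
apply/subset_leq_card/subsetP => x xS; rewrite !inE.
by have := S_x0 x; rewrite /= xS => /negbFE.
Qed.

Section Fcor.

Variables (F K : finFieldType) (m k : nat).
Hypotheses (cardF : #|F| = (2 ^ m)%N) (cardK : #|K| = (2 ^ k)%N).
Hypothesis coprime_km : coprime k m.

Lemma sderiv_fcor (x a b : F * F) (y ya yb z : K) :
  sderiv (fcor m k) (x, y, z) (a, ya, 0) (b, yb, 0) = sderiv (fz m k z) x a b.
Proof.
rewrite /sderiv /fcor /= !addr0 !mulrDl !(trbD cardK).
move: (fz m k z x) (fz m k z (x + a)) (fz m k z (x + b)) (fz m k z (x + a + b)).
by move: (trb k (y * z)) (trb k (ya * z)) (trb k (yb * z)) => [] [] [] [] [] [] [].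
Qed.

Lemma fcor_flat_directions (a b : F * F) (ya yb : K) :
  (forall w, sderiv (fcor m k) w (a, ya, 0) (b, yb, 0) = false) ->
  [\/ a.1 = 0, b.1 = 0 | a.1 = b.1] /\ [\/ a.2 = 0, b.2 = 0 | a.2 = b.2].
Proof.
move=> D2; split.
  have [t trb_t] := trace_neq0 cardK.
  apply: (sderiv_gold_eq0 cardF coprime_km (s1 := a.2) (s2 := b.2)) => x.
  by have := D2 ((0, x), 0, t); rewrite sderiv_fcor /fz trb_t.
apply: (sderiv_gold_eq0 cardF coprime_km (s1 := a.1) (s2 := b.1)) => x.
by have := D2 ((x, 0), 0, 0); rewrite sderiv_fcor /fz trb0.
Qed.

Lemma bent2_fz (z : K) : odd m -> bent2 m (fz m k z : F * F -> bool).
Proof.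
move=> m_odd; rewrite /fz; case: (trb k z).
  exact: bent2_swap (bent2_gold cardF coprime_km m_odd).
exact: bent2_gold.
Qed.

Lemma card_flat_zslice (E : finType) (Phi : E -> (F * F) * K * K) :
  injective Phi -> (forall w e1 e2, sderiv (fcor m k) w (Phi e1) (Phi e2) = false) ->
  (#|[set e | (Phi e).2 == 0%R]| <= 2 ^ k * 2 ^ 2)%N.
Proof.
move=> Phi_inj flat; set Z := [set e | _].
have PhiZ e : e \in Z -> Phi e = ((Phi e).1.1, (Phi e).1.2, 0).
  by rewrite inE => /eqP <-; case: (Phi e) => -[].
have flatZ e1 e2 : e1 \in Z -> e2 \in Z ->
    [\/ (Phi e1).1.1.1 = 0, (Phi e2).1.1.1 = 0 | (Phi e1).1.1.1 = (Phi e2).1.1.1] /\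
    [\/ (Phi e1).1.1.2 = 0, (Phi e2).1.1.2 = 0 | (Phi e1).1.1.2 = (Phi e2).1.1.2].
  move=> /PhiZ Phi1 /PhiZ Phi2.
  apply: (fcor_flat_directions (ya := (Phi e1).1.2) (yb := (Phi e2).1.2)) => w.
  by rewrite -Phi1 -Phi2.
pose T1 := [set (Phi e).1.1.1 | e in Z]; pose T2 := [set (Phi e).1.1.2 | e in Z].
have card_T1 : (#|T1| <= 2)%N.
  apply: (card_le2 (x0 := 0)) => _ _ /imsetP[e1 Z1 ->] /imsetP[e2 Z2 ->].
  by case: (flatZ _ _ Z1 Z2).
have card_T2 : (#|T2| <= 2)%N.
  apply: (card_le2 (x0 := 0)) => _ _ /imsetP[e1 Z1 ->] /imsetP[e2 Z2 ->].
  by case: (flatZ _ _ Z1 Z2).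
pose coord e := ((Phi e).1.2, (Phi e).1.1).
have coord_inj : {in Z &, injective coord}.
  move=> e1 e2 /PhiZ Phi1 /PhiZ Phi2 [y12 x12].
  by apply: Phi_inj; rewrite Phi1 Phi2 y12 x12.
have coord_sub : coord @: Z \subset setX [set: K] (setX T1 T2).
  by apply/subsetP => _ /imsetP[e Ze ->]; rewrite !inE /=; apply/andP; split; apply: imset_f.
rewrite -(card_in_imset coord_inj) -cardK -cardsT.
apply: leq_trans (subset_leq_card coord_sub) _.
by rewrite !cardsX leq_mul // leq_mul.
Qed.

Lemma not_MMsharp_fcor (E : finFieldType) :
  #|E| = (2 ^ (m + k))%N -> (k + 2 < m)%N ->
  ~ MMsharp E (m + k) (fcor m k : (F * F) * K * K -> bool).
Proof.
move=> cardE k2m /(MMsharp_flat_embedding cardE) [Phi [PhiD Phi_inj flat]].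
have card_E : (#|E| <= #|K| * #|[set e | (Phi e).2 == 0%R]|)%N.
  by apply: (card_le_kernel (phi := fun e => (Phi e).2)) => e1 e2; rewrite PhiD.
have := leq_trans card_E (leq_mul (leqnn _) (card_flat_zslice Phi_inj flat)).
by rewrite cardE cardK -!expnD leq_exp2l //; lia.
Qed.

End Fcor.

Local Close Scope ring_scope.
Unset Implicit Arguments.

Theorem corollary3p12 (m k : nat) (F K E : finFieldType)
  (hm : (0 < m)%N) (hk : (0 < k)%N) (hcop : coprime k m) (hodd : odd m)
  (hmk : (k + 2 < m)%N)
  (hF : #|F| = 2 ^ m) (hK : #|K| = 2 ^ k) (hE : #|E| = 2 ^ (m + k)) :
  isGMM m k (fcor m k : (F * F) * K * K -> bool) /\
  ~ MMsharp E (m + k) (fcor m k : (F * F) * K * K -> bool).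
Proof.
split; last exact: not_MMsharp_fcor.
by exists (fz m k); split=> // z; apply: bent2_fz.
Qed.
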